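(* Let $G=(V,v,E)$ be a directed graph with $V=\{1,\dots,n\}$, target node $v$, edge set $E$, and let $Z$ be a set of ordered node pairs with $Z\cap E=\emptyset$. For $\mathbf{y}\in\{0,1\}^{Z}$ with support $Y$, let $\mathcal{FR}(\mathbf{y})\ge0$ be the expected first return time to $v$ of the PageRank random walk on $(V,E\cup Y)$. Let $\mathcal{Y}$ be a constraint set with $\mathcal{Y}\cap\{0,1\}^{Z}\ne\emptyset$, for disjoint $S,N\subseteq Z$ let $\gamma(S,N)=\min\{\mathcal{FR}(\mathbf{y}): y_e=1\ \forall e\in S,\ y_e=0\ \forall e\in N,\ \mathbf{y}\in\{0,1\}^{Z}\}$, and let $m=\min_{\mathbf{y}\in\{0,1\}^{Z}}\mathcal{FR}(\mathbf{y})$. Let $\bar{\mathbf{y}}\in\mathcal{Y}\cap\{0,1\}^{Z}$ with support $\bar Y$, let $e^1,\dots,e^{K}$ be an arbitrary ordering of $Z\setminus\bar Y$, and let $\hat\pi_{e^r}(\bar{\mathbf{y}})=\min\{0,-\mathcal{FR}(\bar{\mathbf{y}})+\gamma(\{e^r\},\{e^{r+1},\dots,e^{K}\})\}$. Define for $\mathbf{y}\in[0,1]^{Z}$ $$B(\mathbf{y})=\mathcal{FR}(\bar{\mathbf{y}})+\sum_{e\in\bar Y}\min\{0,\gamma(\emptyset,\{e\})-\mathcal{FR}(\bar{\mathbf{y}})\}(1-y_e)+\sum_{k=1}^{K}\hat\pi_{e^k}(\bar{\mathbf{y}})y_{e^k},$$ $$L(\mathbf{y})=\mathcal{FR}(\bar{\mathbf{y}})+\sum_{e\in\bar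 Y}(m-\mathcal{FR}(\bar{\mathbf{y}}))(1-y_e)+\sum_{e\in Z\setminus\bar Y}(m-\mathcal{FR}(\bar{\mathbf{y}}))y_e.$$ Then the inequality $\theta\ge B(\mathbf{y})$ is stronger than the $L$-shaped inequality $\theta\ge L(\mathbf{y})$, i.e. $B(\mathbf{y})\ge L(\mathbf{y})$ for all $\mathbf{y}\in[0,1]^{Z}$ (coefficientwise comparison).
   Context: The PageRank random walk is the random walk defined by the PageRank (Google) matrix with fixed damping and teleportation, as in Csáji–Jungers–Blondel; the expected first return time to $v$ is the expected number of steps for the walk started at $v$ to return to $v$. *)

From HB Require Import structures.
From mathcomp Require Import all_boot all_order all_algebra.
From mathcomp Require Import all_classical all_reals all_analysis.
Set Implicit Arguments. Unset Strict Implicit. Unset Printing Implicit Defensive.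
Import Order.TTheory GRing.Theory Num.Theory.
Local Open Scope ring_scope.
Local Open Scope classical_set_scope.

Section PR.
Variables (R : realType) (n : nat).
Notation pt := ('I_n * 'I_n)%type.

Definition outdeg (F : {set pt}) (i : 'I_n) : nat := #|[set j | (i, j) \in F]|.

(* row-stochastic link matrix of (V,F); dangling rows replaced by the
   teleportation distribution z *)
Definition link_mx (z : 'I_n -> R) (F : {set pt}) : 'M[R]_n :=
  \matrix_(i, j) (if outdeg F i == 0%N then z j
                  else ((i, j) \in F)%:R / (outdeg F i)%:R).

(* PageRank (Google) matrix with damping c (teleportation probability c)
   and teleportation distribution z *)
Definition google_mx (c : R) (z : 'I_n -> R) (F : {set pt}) : 'M[R]_n :=
  \matrix_(i, j) ((1 - c) * link_mx z F i j + c * z j).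

Definition taboo_mx (P : 'M[R]_n) (v : 'I_n) : 'M[R]_n :=
  \matrix_(i, j) (if j == v then 0 else P i j).

Definition mx_pow (Q : 'M[R]_n) (k : nat) : 'M[R]_n := iter k (mulmx Q) 1%:M.

(* P_v(T_v^+ > k): probability that the walk started at v has not returned
   to v during steps 1..k *)
Definition surv (P : 'M[R]_n) (v : 'I_n) (k : nat) : R :=
  \sum_j mx_pow (taboo_mx P v) k v j.

(* expected first return time E_v[T_v^+] = sum_{k>=0} P_v(T_v^+ > k) *)
Definition exp_return_time (P : 'M[R]_n) (v : 'I_n) : \bar R :=
  (\sum_(k <oo) (surv P v k)%:E)%E.

Definition first_return (c : R) (z : 'I_n -> R) (F : {set pt}) (v : 'I_n) : R :=
  fine (exp_return_time (google_mx c z F) v).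

Definition gamma_fn (FR : {set pt} -> R) (Z S N : {set pt}) : R :=
  inf [set FR Y | Y in [set Y : {set pt} |
        [&& Y \subset Z, S \subset Y & [disjoint Y & N]]]].

End PR.

From HB Require Import structures.
From mathcomp Require Import all_boot all_order all_algebra.
From mathcomp Require Import all_classical all_reals all_analysis.
Import Order.TTheory GRing.Theory Num.Theory.
Local Open Scope ring_scope.

(* gamma(S, N) is the minimum of FR over a subfamily of the subsets of Z, so
   whenever that subfamily is nonempty it dominates m = gamma(set0, set0); so
   does FR(ybar).  Hence every coefficient of B is at least the nonpositive
   common coefficient m - FR(ybar) of L.  For gamma({e^r}, {e^(r+1),...,e^K})
   the set {e^r} is feasible because the ordering has no repetitions.  As y_e
   and 1 - y_e are nonnegative on [0,1]^Z, L <= B follows pointwise. *)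

Section FiniteImageInf.
Context {R : realType} {T : finType} (f : T -> R).
Local Open Scope classical_set_scope.

Lemma has_lbound_fimage (P : set T) : has_lbound (f @` P).
Proof.
exists (- \sum_x `|f x|) => _ [x _ <-].
rewrite lerNl (le_trans (ler_norm _)) // normrN.
by rewrite (bigD1 x) //= lerDl sumr_ge0.
Qed.

Lemma inf_fimage_le (P : set T) x : P x -> inf (f @` P) <= f x.
Proof. by move=> Px; apply: ge_inf (has_lbound_fimage P) _ (imageP f Px). Qed.

Lemma le_inf_fimage (P Q : set T) :
  Q `<=` P -> Q !=set0 -> inf (f @` P) <= inf (f @` Q).
Proof.
move=> QP [y Qy]; apply: lb_le_inf; first by exists (f y), y.
by move=> _ [x Qx <-]; apply/inf_fimage_le/QP.
Qed.

End FiniteImageInf.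

Section Gamma.
Variables (R : realType) (n : nat).
Variables (FR : {set 'I_n * 'I_n} -> R) (Z : {set 'I_n * 'I_n}).

Definition gamma_feasible (S N Y : {set 'I_n * 'I_n}) : bool :=
  [&& Y \subset Z, S \subset Y & [disjoint Y & N]].

Lemma gamma_feasible00 Y :
  gamma_feasible finset.set0 finset.set0 Y = (Y \subset Z).
Proof.
rewrite /gamma_feasible finset.sub0set finset.disjoints_subset finset.setC0.
by rewrite finset.subsetT !andbT.
Qed.

Lemma gamma_fn_le S N Y : gamma_feasible S N Y -> gamma_fn FR Z S N <= FR Y.
Proof. exact: inf_fimage_le FR _ _. Qed.

Lemma gamma_fn00_le S N :
  (exists Y, gamma_feasible S N Y) ->
  gamma_fn FR Z finset.set0 finset.set0 <= gamma_fn FR Z S N.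
Proof.
move=> feasSN; apply: le_inf_fimage FR _ _ _ feasSN.
move=> Y /and3P[YZ _ _]; change (gamma_feasible finset.set0 finset.set0 Y).
by rewrite gamma_feasible00.
Qed.

End Gamma.

Lemma subr_le_min0 (R : realDomainType) (m a g : R) :
  m <= a -> m <= g -> m - a <= Num.min 0 (g - a).
Proof. by move=> ma mg; rewrite le_min subr_le0 ma lerD2r. Qed.

Lemma nth_notin_drop (T : eqType) (x0 : T) (s : seq T) k :
  uniq s -> (k < size s)%N -> nth x0 s k \notin drop k.+1 s.
Proof.
by move=> us ks; have := drop_uniq k us; rewrite (drop_nth x0 ks) => /andP[].
Qed.

Lemma big_set_nth {R : nmodType} {T : finType} (x0 : T) (A : {set T})
    (s : seq T) (F : T -> R) :
  uniq s -> s =i A -> \sum_(e in A) F e = \sum_(k < size s) F (nth x0 s k).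
Proof.
move=> us sA; transitivity (\sum_(e <- s) F e).
  by rewrite big_uniq //; apply: eq_bigl => e; rewrite sA.
by rewrite (big_nth x0) big_mkord.
Qed.

Theorem corollary2 (R : realType) (n : nat) (v : 'I_n)
  (E Z : {set 'I_n * 'I_n}) (c : R) (z : 'I_n -> R)
  (Ycal : set ('I_n * 'I_n -> R)) (Ybar : {set 'I_n * 'I_n})
  (s : seq ('I_n * 'I_n)) :
  0 < c < 1 -> (forall i, 0 < z i) -> \sum_i z i = 1 ->
  [disjoint Z & E] ->
  Ybar \subset Z ->
  Ycal (fun e => (e \in Ybar)%:R) ->
  uniq s -> s =i Z :\: Ybar ->
  let FR := fun Y : {set 'I_n * 'I_n} => first_return c z (E :|: Y) v in
  let gam := gamma_fn FR Z in
  let m := gam finset.set0 finset.set0 in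
  let pihat := fun r : nat =>
    Num.min 0 (- FR Ybar + gam [set nth (v, v) s r] [set x in drop r.+1 s]) in
  let B := fun y : 'I_n * 'I_n -> R =>
    FR Ybar
    + \sum_(e in Ybar) Num.min 0 (gam finset.set0 [set e] - FR Ybar) * (1 - y e)
    + \sum_(k < size s) pihat k * y (nth (v, v) s k) in
  let L := fun y : 'I_n * 'I_n -> R =>
    FR Ybar
    + \sum_(e in Ybar) (m - FR Ybar) * (1 - y e)
    + \sum_(e in Z :\: Ybar) (m - FR Ybar) * y e in
  (* coefficientwise comparison *)
  ((forall e, e \in Ybar -> m - FR Ybar <= Num.min 0 (gam finset.set0 [set e] - FR Ybar)) /\
   (forall k : nat, (k < size s)%N -> m - FR Ybar <= pihat k)) /\
  (* hence pointwise on [0,1]^Z *)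
  (forall y : 'I_n * 'I_n -> R,
     (forall e, e \in Z -> 0 <= y e <= 1) -> L y <= B y).
Proof.
move=> _ _ _ _ YbarZ _ us sZYbar FR gam m pihat B L.
have m_le_FRbar : m <= FR Ybar by apply: gamma_fn_le; rewrite gamma_feasible00.
have s_in_Z k : (k < size s)%N -> nth (v, v) s k \in Z.
  by move=> ks; have := mem_nth (v, v) ks; rewrite sZYbar => /setDP[].
have coefYbar e :
    e \in Ybar -> m - FR Ybar <= Num.min 0 (gam finset.set0 [set e] - FR Ybar).
  move=> _; apply/subr_le_min0/gamma_fn00_le => //.
  exists finset.set0.
  by rewrite /gamma_feasible finset.disjoints_subset !finset.sub0set.
have coefs k : (k < size s)%N -> m - FR Ybar <= pihat k.
  move=> ks; rewrite /pihat [- FR Ybar + _]addrC.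
  apply/subr_le_min0/gamma_fn00_le => //; exists [set nth (v, v) s k].
  rewrite /gamma_feasible finset.sub1set s_in_Z // subxx disjoints1 inE.
  exact: nth_notin_drop.
split=> [// | y y01].
rewrite /L /B -!addrA lerD2l (big_set_nth (v, v) _ _ _ us sZYbar).
apply: lerD; [apply: ler_sum => e eYbar | apply: ler_sum => k _].
all: apply: ler_wpM2r.
- have /andP[_ ye1] := y01 e (fintype.subsetP YbarZ e eYbar).
  by rewrite subr_ge0.
- exact: coefYbar.
- by have /andP[] := y01 _ (s_in_Z k (ltn_ord k)).
- exact: coefs.
Qed.
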